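(* Let $X$ be a compact metric space and $(f_n)_{n\ge1}$ a sequence of continuous maps $X\to X$ converging uniformly to a function $\phi\colon X\to X$. Then $\phi\circ f_1^p=f_1^{p+1}$ for every $p\in\mathbb{N}^*$.
   Context: $\mathbb{N}=\{1,2,\dots\}$, $\mathbb{N}^*$ the free ultrafilters on $\mathbb{N}$. For $p\in\mathbb{N}^*$, $p\text{-}\lim_n x_n$ is the unique $y$ with $\{n:x_n\in V\}\in p$ for all neighbourhoods $V$ of $y$. $f_1^n=f_n\circ\cdots\circ f_1$, and $f_1^p(x)=p\text{-}\lim_n f_1^n(x)$ for $p\in\mathbb{N}^*$. $p+1$ is the ultrafilter $\{A\subseteq\mathbb{N}:\{m: m+1\in A\}\in p\}$. *)

From HB Require Import structures.
From mathcomp Require Import all_boot all_order all_algebra.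
From mathcomp Require Import all_classical all_reals all_analysis.
Set Implicit Arguments. Unset Strict Implicit. Unset Printing Implicit Defensive.
Import Order.TTheory GRing.Theory Num.Theory.
Local Open Scope classical_set_scope.

(* Naturals {1,2,...} are represented by Coq's nat; index 0 is unused for the
   maps (f 0 plays no role).  A free ultrafilter on nat: an ultrafilter whose
   members have empty intersection.  (Such a p contains no finite set, in
   particular not {0}, so it is the same as a free ultrafilter on {1,2,...}.) *)
Definition free_ultrafilter (p : set_system nat) : Prop :=
  UltraFilter p /\ \bigcap_(A in p) A = set0.

Definition uf_succ (p : set_system nat) : set_system nat :=
  [set A | p [set m | A m.+1]].

Fixpoint fcomp {X : Type} (f : nat -> X -> X) (n : nat) : X -> X :=
  match n with
  | 0 => id
  | k.+1 => fun x => f k.+1 (fcomp f k x)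
  end.

(* p-lim_n u_n : the (unique, in a Hausdorff space) y such that u @ p --> y;
   u 0 is an arbitrary default used only if no limit exists. *)
Definition plim {X : topologicalType} (p : set_system nat) (u : nat -> X) : X :=
  xget (u 0) [set y | (u @ p) --> y].

Definition fcomp_uf {X : topologicalType} (f : nat -> X -> X)
  (p : set_system nat) (x : X) : X :=
  plim p (fun n => fcomp f n x).

From HB Require Import structures.
From mathcomp Require Import all_boot all_order all_algebra.
From mathcomp Require Import all_classical all_reals all_analysis.
Import Order.TTheory GRing.Theory Num.Theory.
Local Open Scope classical_set_scope.

(* Fix x and write g n := f_1^n(x); by compactness g n converges along the
   ultrafilter p to y := f_1^p(x).  Since g (m+1) = f_{m+1} (g m), the point
   f_1^{p+1}(x) is the p-limit of f_{m+1} (g m).  A free ultrafilter refines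
   the Frechet filter, so along p the maps f_{m+1} are uniformly close to phi,
   which is continuous as a uniform limit of continuous maps; hence
   f_{m+1} (g m) --> phi y along p. *)

Lemma free_ultrafilter_setC1 {p : set_system nat} (N : nat) :
  free_ultrafilter p -> p (~` [set N]).
Proof.
move=> [Up p_free]; have [pN|//] := in_ultra_setVsetC [set N] Up.
suff : (\bigcap_(A in p) A) N by rewrite p_free.
move=> A pA; have Pp := @ultra_proper _ p Up.
by have /filter_ex [m [Am /= <-]] : p (A `&` [set N]) by exact: filterI.
Qed.

Lemma free_ultrafilter_cvg_oo {p : set_system nat} :
  free_ultrafilter p -> p --> \oo.
Proof.
move=> fp; have Pp := @ultra_proper _ p fp.1.
have p_ge N : p [set m | (N <= m)%N].
  elim: N => [|N IHN]; first exact: filterS _ filterT.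
  apply: filterS (filterI IHN (free_ultrafilter_setC1 N fp)) => m /= [].
  by rewrite leq_eqVlt eq_sym => /orP[/eqP|].
by move=> A [N _ sA]; exact: filterS sA (p_ge N).
Qed.

Lemma ultra_cluster_cvg {T U : topologicalType} (p : set_system T) (u : T -> U)
    (y : U) :
  UltraFilter p -> cluster (u @ p) y -> u @ p --> y.
Proof.
move=> Up uy V Vy; have [//|pVC] := in_ultra_setVsetC (u @^-1` V) Up.
by have [z [/= VCz Vz]] := uy (~` V) V pVC Vy.
Qed.

Lemma plim_cvg {X : topologicalType} {p : set_system nat} (u : nat -> X) :
  compact [set: X] -> UltraFilter p -> u @ p --> plim p u.
Proof.
move=> cX Up; have Pp := @ultra_proper _ p Up.
have [y [_ uy]] : [set: X] `&` cluster (u @ p) !=set0 by apply: cX; exact: filterT.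
apply: (xgetPex (u 0) (P := [set y | u @ p --> y])).
by exists y; exact: ultra_cluster_cvg.
Qed.

Lemma plim_eq {X : topologicalType} {p : set_system nat} {PF : ProperFilter p}
    {u : nat -> X} {y : X} :
  hausdorff_space X -> u @ p --> y -> plim p u = y.
Proof.
by move=> hX uy; apply: xget_unique => // z uz; exact: cvg_unique uz uy.
Qed.

Section UniformLimit.
Context {R : realType} {T : Type} {X : topologicalType} {Y : pseudoMetricType R}.

Lemma uniform_cvg_ball (F : set_system (X -> Y)) (phi : X -> Y) (e : R) :
  {uniform, F --> phi} -> (0 < e)%R ->
  \forall g \near F, forall x, ball (phi x) e (g x).
Proof.
move=> Fphi e0; apply: Fphi; apply/uniform_nbhs.
exists [set xy | ball xy.1 e xy.2]; split; last by move=> g /= + x; apply.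
by rewrite -entourage_from_ballE; exists e.
Qed.

Lemma cvg_uniform_comp {f : nat -> X -> Y} {phi : X -> Y} {q : set_system T}
    {Fq : Filter q} {k : T -> nat} {u : T -> X} {x : X} :
  {uniform, f @ \oo --> phi} -> {for x, continuous phi} -> u @ q --> x ->
  k @ q --> \oo -> (fun t => f (k t) (u t)) @ q --> phi x.
Proof.
move=> fphi phix ux kq; apply/cvg_ballP => e e0.
have phiu : \forall t \near q, ball (phi x) (e / 2)%R (phi (u t)).
  by apply: cvg_ball; [exact: cvg_comp ux phix|exact: divr_gt0].
have fn : \forall t \near q, forall z, ball (phi z) (e / 2)%R (f (k t) z).
  apply: (kq [set n | forall z, ball (phi z) (e / 2)%R (f n z)]).
  exact: uniform_cvg_ball fphi (divr_gt0 e0 _).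
apply: filterS (filterI phiu fn) => t [phiut fnt].
by rewrite [e]splitr; apply: ball_triangle phiut (fnt _).
Qed.

End UniformLimit.

Theorem theorem3p5 (R : realType) (X : metricType R)
  (f : nat -> X -> X) (phi : X -> X) :
  compact [set: X] ->
  (forall n, (0 < n)%N -> continuous (f n)) ->
  {uniform, f @ \oo --> phi} ->
  forall p : set_system nat, free_ultrafilter p ->
  phi \o fcomp_uf f p = fcomp_uf f (uf_succ p).
Proof.
move=> cX fc fphi p fp; have Pp := @ultra_proper _ p fp.1.
have phic : continuous phi.
  by apply: uniform_limit_continuous fphi; exists 1%N => // n /= /fc.
apply/funext => x /=; rewrite /fcomp_uf (_ : uf_succ p = succn @ p) //.
set g := fun n => fcomp f n x.
symmetry; apply: plim_eq; first exact: metric_hausdorff.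
apply: (cvg_uniform_comp (k := succn) fphi (phic _) (plim_cvg g cX fp.1)).
by move=> A /(cvg_addnl 1) /(free_ultrafilter_cvg_oo fp).
Qed.
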